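(* Let $0<r\le1<R$ and define $f(t)=t^2$ for $|t|\le1$, $f(t)=|t|^r$ for $1<|t|\le R$, and $f(t)=\infty$ for $|t|>R$. Then for any $p\ge1$ and any $a_1\ge a_2\ge\dots\ge a_n\ge0$, the quantity $S=\sup\{\sum_ia_it_i:\sum_if(t_i)\le p\}$ satisfies, up to universal multiplicative constants, $$S\sim\begin{cases}\sqrt p\sqrt{\sum_ia_i^2}+p^{1/r}a_1 & 1\le p\le R^r,\\ \sqrt p\sqrt{\sum_ia_i^2}+R\sum_{i\le p/R^r}a_i & R^r<p\le R^2,\\ \sqrt p\sqrt{\sum_{i\ge p/R^2}a_i^2}+R\sum_{i\le p/R^r}a_i & R^2<p.\end{cases}$$
   Context: $A\sim B$ means $B/C\le A\le CB$ for a universal constant $C$. *)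

From HB Require Import structures.
From mathcomp Require Import all_boot all_order all_algebra.
From mathcomp Require Import all_classical all_reals all_analysis.
Set Implicit Arguments. Unset Strict Implicit. Unset Printing Implicit Defensive.
Import Order.TTheory GRing.Theory Num.Theory.
Local Open Scope ring_scope.
Local Open Scope classical_set_scope.

Definition fA4 {K : realType} (r R : K) (t : K) : \bar K :=
  if `|t| <= 1 then (t ^+ 2)%:E
  else if `|t| <= R then (`|t| `^ r)%:E
  else +oo%E.

Definition SA4 {K : realType} (n : nat) (r R p : K) (a : 'I_n -> K) : K :=
  sup [set x : K | exists t : 'I_n -> K,
         (\sum_(i < n) fA4 r R (t i) <= p%:E)%E /\ x = \sum_(i < n) a i * t i].

(* The piecewise two-sided bound; indices are 1-based in the paper,
   so the paper's index i corresponds to the ordinal i-1 here. *)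
Definition BA4 {K : realType} (n : nat) (r R p : K) (a : 'I_n -> K) : K :=
  if p <= R `^ r then
    Num.sqrt p * Num.sqrt (\sum_(i < n) a i ^+ 2) + p `^ r^-1 * (\sum_(i < n | val i == 0%N) a i)
  else if p <= R ^+ 2 then
    Num.sqrt p * Num.sqrt (\sum_(i < n) a i ^+ 2)
      + R * \sum_(i < n | (i.+1)%:R <= p / R `^ r) a i
  else
    Num.sqrt p * Num.sqrt (\sum_(i < n | p / R ^+ 2 <= (i.+1)%:R) a i ^+ 2)
      + R * \sum_(i < n | (i.+1)%:R <= p / R `^ r) a i.

From HB Require Import structures.
From mathcomp Require Import all_boot all_order all_algebra.
From mathcomp Require Import all_classical all_reals all_analysis.
From mathcomp Require Import ring lra.
Import Order.TTheory GRing.Theory Num.Theory.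
Local Open Scope ring_scope.
Set Implicit Arguments. Unset Strict Implicit. Unset Printing Implicit Defensive.

(* Write H for the sum of the first p/R^r coefficients a_i and A for the l2 norm of a.
   Lower bounds come from three test vectors: a multiple of a normalised to sum t_i^2 = p
   and truncated at R, the vector p^(1/r) e_1 (when p <= R^r), and t_i = R on the first
   p/R^r coordinates, which gives R H.  For the upper bound, a feasible t splits into its
   coordinates with |t_i| <= 1, controlled by Cauchy-Schwarz against sum t_i^2 <= p, and
   the others, for which |t_i| <= M^(1-r) |t_i|^r whenever |t_i| <= M.  The weights
   |t_i|^r <= R^r have total mass at most p, and on a nonincreasing sequence such weights
   cannot gain more than 3 R^r H, since every a_i past index p/R^r is at most 2 R^r H / p.
   When p > R^2 the same comparison shows that the coefficients past index p/R^2 are at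
   most 2 R^2 H / p, so only they contribute to the l2 term. *)

Lemma ler_sum_subset (K : numDomainType) n (P Q : pred 'I_n) (F : 'I_n -> K) :
  (forall i, P i -> Q i) -> (forall i, Q i -> 0 <= F i) ->
  \sum_(i < n | P i) F i <= \sum_(i < n | Q i) F i.
Proof.
move=> PQ F0; rewrite big_mkcond [X in _ <= X]big_mkcond; apply: ler_sum => i _.
case: ifP => Pi; first by rewrite (PQ i Pi) /= lexx.
by case: ifP => Qi //; exact: F0.
Qed.

Lemma cauchy_schwarz (K : rcfType) n (P : pred 'I_n) (u v : 'I_n -> K) :
  \sum_(i < n | P i) u i * v i <=
  Num.sqrt (\sum_(i < n | P i) u i ^+ 2) * Num.sqrt (\sum_(i < n | P i) v i ^+ 2).
Proof.
set X := \sum_(i < n | P i) u i ^+ 2; set Y := \sum_(i < n | P i) v i ^+ 2.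
have X0 : 0 <= X by apply: sumr_ge0 => i _; exact: sqr_ge0.
have Y0 : 0 <= Y by apply: sumr_ge0 => i _; exact: sqr_ge0.
have vanish (w z : 'I_n -> K) : \sum_(i < n | P i) w i ^+ 2 = 0 ->
    \sum_(i < n | P i) w i * z i = 0.
  move=> w0; rewrite big1 // => i Pi.
  have /eqP := psumr_eq0P (fun i _ => sqr_ge0 (w i)) w0 Pi.
  by rewrite sqrf_eq0 => /eqP ->; rewrite mul0r.
have [/vanish -> | Xn] := eqVneq X 0; first by rewrite mulr_ge0 ?sqrtr_ge0.
have [Ye | Yn] := eqVneq Y 0.
  by under eq_bigr do rewrite mulrC; rewrite vanish // mulr_ge0 ?sqrtr_ge0.
set s := Num.sqrt X; set q := Num.sqrt Y.
have sp : 0 < s by rewrite sqrtr_gt0 lt_def Xn X0.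
have qp : 0 < q by rewrite sqrtr_gt0 lt_def Yn Y0.
have s2 : s ^+ 2 = X by rewrite sqr_sqrtr.
have q2 : q ^+ 2 = Y by rewrite sqr_sqrtr.
(* termwise AM-GM: [2 s q u v <= q^2 u^2 + s^2 v^2] *)
rewrite -(ler_pM2r (_ : 0 < 2 * s * q)) ?mulr_gt0 // mulr_suml.
apply: (@le_trans _ _ (\sum_(i < n | P i) (q ^+ 2 * u i ^+ 2 + s ^+ 2 * v i ^+ 2))).
  apply: ler_sum => i _; rewrite -subr_ge0.
  have -> : q ^+ 2 * u i ^+ 2 + s ^+ 2 * v i ^+ 2 - u i * v i * (2 * s * q)
          = (q * u i - s * v i) ^+ 2 by ring.
  exact: sqr_ge0.
rewrite big_split /= -!mulr_sumr -/X -/Y -s2 -q2.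
by rewrite (_ : _ + _ = s * q * (2 * s * q)) //; ring.
Qed.

Section HeadSums.

Variables (K : realFieldType) (n : nat).

Lemma head_count_le (x : K) : 0 <= x -> \sum_(i < n | (i.+1)%:R <= x) (1 : K) <= x.
Proof.
move=> x0; elim: n => [|m IH]; first by rewrite big_ord0.
rewrite big_mkcond big_ord_recr /= -big_mkcond /=.
case: ifP => [hm|_]; last by rewrite addr0.
have : \sum_(i < m | (i.+1)%:R <= x) (1 : K) <= m%:R.
  apply: le_trans (_ : \sum_(i < m) (1 : K) <= m%:R); last by rewrite sumr_const card_ord.
  by apply: ler_sum_subset => // i _; exact: ler01.
by rewrite -natr1 in hm; lra.
Qed.

Lemma head_count_ge_or (x : K) : 1 <= x ->
  n%:R <= \sum_(i < n | (i.+1)%:R <= x) (1 : K) \/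
  x / 2 <= \sum_(i < n | (i.+1)%:R <= x) (1 : K).
Proof.
move=> x1; elim: n => [|m IH]; first by left; rewrite big_ord0.
rewrite big_mkcond big_ord_recr /= -big_mkcond /=.
have m1 := @natr1 K m.
case: ifP => hm; first by case: IH => IH; [left|right]; lra.
rewrite addr0; move/negbT: hm; rewrite -ltNge => hm.
case: IH => IH; right; last lra.
case: m IH hm m1 => [|m] IH hm m1; first lra.
by have := @natr1 K m; have : 0 <= m%:R :> K by []; lra.
Qed.

Lemma head_count_ge (x : K) (i : 'I_n) : 1 <= x -> x <= (i.+1)%:R ->
  x / 2 <= \sum_(j < n | (j.+1)%:R <= x) (1 : K).
Proof.
move=> x1 xi; have : (i.+1)%:R <= n%:R :> K by rewrite ler_nat ltn_ord.
by case: (head_count_ge_or x1) => h; lra.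
Qed.

Variable a : 'I_n -> K.
Hypothesis a_ge0 : forall i, 0 <= a i.
Hypothesis a_noninc : forall i j : 'I_n, (i <= j)%N -> a j <= a i.

Lemma head_sum_ge (x : K) (i : 'I_n) : 1 <= x -> x <= (i.+1)%:R ->
  a i * x <= 2 * \sum_(j < n | (j.+1)%:R <= x) a j.
Proof.
move=> x1 xi.
have ai : a i * \sum_(j < n | (j.+1)%:R <= x) (1 : K) <= \sum_(j < n | (j.+1)%:R <= x) a j.
  rewrite mulr_sumr; apply: ler_sum => j hj; rewrite mulr1; apply: a_noninc.
  by rewrite -ltnS -(ler_nat K); apply: le_trans xi.
have := ler_wpM2l (a_ge0 i) (head_count_ge x1 xi); lra.
Qed.

Lemma sum_mul_le_head (s : 'I_n -> K) (c p : K) : 0 < c -> c <= p ->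
  (forall i, 0 <= s i <= c) -> \sum_(i < n) s i <= p ->
  \sum_(i < n) a i * s i <= 3 * c * \sum_(i < n | (i.+1)%:R <= p / c) a i.
Proof.
move=> c0 cp s0c sp; set x := p / c; set H := \sum_(i < n | _) a i.
have x1 : 1 <= x by rewrite /x ler_pdivlMr // mul1r.
have H0 : 0 <= H by apply: sumr_ge0.
have s0 i : 0 <= s i by case/andP: (s0c i).
rewrite (bigID (fun i : 'I_n => (i.+1)%:R <= x)) /=.
have head_part : \sum_(i < n | (i.+1)%:R <= x) a i * s i <= c * H.
  rewrite /H mulr_sumr; apply: ler_sum => i _; rewrite mulrC.
  by apply: ler_wpM2r => //; case/andP: (s0c i).
have tail_part : \sum_(i < n | ~~ ((i.+1)%:R <= x)) a i * s i <= 2 * H / x * p.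
  apply: (@le_trans _ _ (\sum_(i < n | ~~ ((i.+1)%:R <= x)) 2 * H / x * s i)).
    apply: ler_sum => i /negbTE hi; apply: ler_wpM2r => //.
    rewrite ler_pdivlMr; last lra.
    by apply: head_sum_ge => //; apply: ltW; rewrite ltNge hi.
  rewrite -mulr_sumr; apply: ler_wpM2l; first by rewrite divr_ge0 //; lra.
  apply: le_trans sp; rewrite [X in _ <= X](bigID (fun i : 'I_n => (i.+1)%:R <= x)) /=.
  by rewrite lerDr; apply: sumr_ge0.
have : 2 * H / x * p = 2 * c * H by rewrite /x; field; rewrite gt_eqF //; lra.
lra.
Qed.

End HeadSums.

Lemma ler_powR_interpolate (K : realType) (r x M : K) : r <= 1 -> 0 <= x -> x <= M ->
  x <= x `^ r * M `^ (1 - r).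
Proof.
move=> r1 x0 xM.
have xM1r : x `^ (1 - r) <= M `^ (1 - r).
  by apply: ge0_ler_powR; rewrite ?nnegrE //; [lra | exact: le_trans xM].
have [->|xn0] := eqVneq x 0; first by rewrite mulr_ge0 ?powR_ge0.
apply: le_trans (ler_wpM2l (powR_ge0 _ _) xM1r).
by rewrite -powRD ?xn0 ?implybT // addrC subrK powRr1.
Qed.

Definition fA4_fin {K : realType} (r t : K) : K :=
  if `|t| <= 1 then t ^+ 2 else `|t| `^ r.

Definition feasibleA4 {K : realType} {n : nat} (r R p : K) (t : 'I_n -> K) : Prop :=
  (forall i, `|t i| <= R) /\ \sum_(i < n) fA4_fin r (t i) <= p.

Section Feasible.

Variables (K : realType) (r R p : K) (n : nat).
Hypothesis R_gt1 : 1 < R.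

Lemma fA4_fin_ge0 (t : K) : 0 <= fA4_fin r t.
Proof. by rewrite /fA4_fin; case: ifP => _; rewrite ?sqr_ge0 ?powR_ge0. Qed.

Lemma fA4_fin0 : fA4_fin r 0 = 0.
Proof. by rewrite /fA4_fin normr0 ler01 expr0n. Qed.

Lemma fA4_fin_le_sqr (t : K) : r <= 2 -> fA4_fin r t <= t ^+ 2.
Proof.
move=> r2; rewrite /fA4_fin; case: ifP => // /negbT; rewrite -ltNge => t1.
by rewrite -real_normK ?num_real // -powR_mulrn //; apply: ler_powR => //; exact: ltW.
Qed.

Lemma fA4E (t : K) : `|t| <= R -> fA4 r R t = (fA4_fin r t)%:E.
Proof. by move=> tR; rewrite /fA4 /fA4_fin; case: ifP => // _; rewrite tR. Qed.

Lemma fA4_ge0 (t : K) : (0 <= fA4 r R t)%E.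
Proof.
rewrite /fA4; case: ifP => _; first by rewrite lee_fin sqr_ge0.
by case: ifP => _ //; rewrite lee_fin powR_ge0.
Qed.

Lemma feasibleA4P (t : 'I_n -> K) :
  (\sum_(i < n) fA4 r R (t i) <= p%:E)%E <-> feasibleA4 r R p t.
Proof.
have sumE : (forall i, `|t i| <= R) ->
    \sum_(i < n) fA4 r R (t i) = (\sum_(i < n) fA4_fin r (t i))%:E.
  by move=> tR; rewrite -sumEFin; apply: eq_bigr => i _; rewrite fA4E.
split=> [hs | [tR hs]]; last by rewrite sumE // lee_fin.
have tR i : `|t i| <= R.
  apply/negPn/negP => tiR.
  have tiR1 : (`|t i| <= 1) = false by apply: contraNF tiR => /le_trans; apply; exact: ltW.
  have : (fA4 r R (t i) <= p%:E)%E.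
    apply: le_trans hs; rewrite (bigD1 i) //= leeDl //.
    by apply: sume_ge0 => j _; exact: fA4_ge0.
  by rewrite /fA4 tiR1 (negbTE tiR) leye_eq.
by split=> //; move: hs; rewrite sumE // lee_fin.
Qed.

Lemma feasibleA4_0 : 0 <= p -> feasibleA4 r R p (fun _ : 'I_n => 0).
Proof.
move=> p0; split=> [i|]; first by rewrite normr0 (le_trans ler01 (ltW R_gt1)).
by rewrite big1 // => i _; exact: fA4_fin0.
Qed.

Lemma le_SA4 (a t : 'I_n -> K) :
  feasibleA4 r R p t -> \sum_(i < n) a i * t i <= SA4 r R p a.
Proof.
move=> ft; apply: sup_upper_bound; last by exists t; split=> //; apply/feasibleA4P.
split; first by exists (\sum_(i < n) a i * t i), t; split=> //; apply/feasibleA4P.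
exists (\sum_(i < n) `|a i| * R) => _ [u [/feasibleA4P [uR _] ->]].
apply: ler_sum => i _; apply: le_trans (ler_norm _) _.
by rewrite normrM ler_wpM2l.
Qed.

Lemma SA4_le (a : 'I_n -> K) (y : K) : 0 <= p ->
  (forall t, feasibleA4 r R p t -> \sum_(i < n) a i * t i <= y) -> SA4 r R p a <= y.
Proof.
move=> p0 ub; apply: ge_sup => [|_ [t [/feasibleA4P ft ->]]]; last exact: ub.
exists 0, (fun=> 0); split; first by apply/feasibleA4P; exact: feasibleA4_0.
by rewrite big1 // => i _; rewrite mulr0.
Qed.

Lemma SA4_ge0 (a : 'I_n -> K) : 0 <= p -> 0 <= SA4 r R p a.
Proof.
move=> p0; apply: le_trans (le_SA4 a (feasibleA4_0 p0)).
by rewrite big1 // => i _; rewrite mulr0.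
Qed.

End Feasible.

Lemma truncation_loss (K : realFieldType) (R M a y : K) :
  0 < R -> 0 <= a -> 0 <= M -> (R < y -> a <= M) ->
  a * y <= a * Num.min y R + M / R * y ^+ 2.
Proof.
move=> R_gt0 a0 M0 aM; have [yR|Ry] := leP y R.
  by rewrite lerDl mulr_ge0 ?divr_ge0 ?sqr_ge0 // ltW.
(* beyond the truncation level, [a y <= a y (y / R) <= M y^2 / R] *)
have yR1 : 1 <= y / R by rewrite ler_pdivlMr ?mul1r ?ltW.
have ay0 : 0 <= a * y by rewrite mulr_ge0 //; lra.
have : a * y * (y / R) <= M * y * (y / R).
  by rewrite ler_wpM2r ?ler_wpM2r ?(aM Ry) //; lra.
have : a * y <= a * y * (y / R) by rewrite ler_peMr.
have : M * y * (y / R) = M / R * y ^+ 2 by ring.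
have : 0 <= a * R by rewrite mulr_ge0 // ltW.
lra.
Qed.

Section LowerBounds.

Variables (K : realType) (r R p : K) (n : nat) (a : 'I_n -> K).
Hypotheses (R_gt1 : 1 < R) (p_ge0 : 0 <= p) (a_ge0 : forall i, 0 <= a i).

Let R_gt0 : 0 < R := lt_trans ltr01 R_gt1.
Let R_ge0 : 0 <= R := ltW R_gt0.

Lemma le_SA4_sqrt (P : pred 'I_n) (M : K) : r <= 2 -> 0 <= M ->
  (forall i, P i ->
     R * Num.sqrt (\sum_(j < n | P j) a j ^+ 2) < Num.sqrt p * a i -> a i <= M) ->
  Num.sqrt p * Num.sqrt (\sum_(j < n | P j) a j ^+ 2) <= SA4 r R p a + M * p / R.
Proof.
move=> r2 M0 aM; set A2 := \sum_(j < n | P j) a j ^+ 2; set A := Num.sqrt A2.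
have S0 := SA4_ge0 r R_gt1 a p_ge0.
have MpR : 0 <= M * p / R by rewrite divr_ge0 ?mulr_ge0 // ltW.
have A20 : 0 <= A2 by apply: sumr_ge0 => i _; exact: sqr_ge0.
have [A0|An0] := eqVneq A2 0; first by rewrite /A A0 sqrtr0 mulr0; lra.
have Ap : 0 < A by rewrite sqrtr_gt0 lt_def An0 A20.
pose l := Num.sqrt p / A.
have l0 : 0 <= l by rewrite divr_ge0 ?sqrtr_ge0 // ltW.
pose t i := if P i then Num.min (l * a i) R else 0.
have la0 i : 0 <= l * a i by rewrite mulr_ge0.
have sum_la2 : \sum_(i < n | P i) (l * a i) ^+ 2 = p.
  under eq_bigr do rewrite exprMn.
  by rewrite -mulr_sumr expr_div_n sqr_sqrtr // sqr_sqrtr // divfK.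
have ft : feasibleA4 r R p t.
  split=> [i|].
    by rewrite /t; case: (P i); rewrite ?normr0 ?ger0_norm ?ge_min ?lexx ?orbT ?le_min ?la0 ?ltW.
  rewrite -sum_la2 [X in _ <= X]big_mkcond; apply: ler_sum => i _; rewrite /t.
  case: (P i); last by rewrite fA4_fin0.
  apply: le_trans (fA4_fin_le_sqr _ r2) _.
  by rewrite ler_sqr ?nnegrE ?le_min ?la0 ?ge_min ?lexx.
have hS : \sum_(i < n | P i) a i * Num.min (l * a i) R <= SA4 r R p a.
  apply: le_trans _ (le_SA4 R_gt1 a ft); rewrite big_mkcond.
  by apply: ler_sum => i _; rewrite /t; case: (P i); rewrite ?mulr0.
have loss : \sum_(i < n | P i) a i * (l * a i)
    <= \sum_(i < n | P i) (a i * Num.min (l * a i) R + M / R * (l * a i) ^+ 2).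
  apply: ler_sum => i Pi; apply: truncation_loss => // lR; apply: aM => //.
  by rewrite -(ltr_pM2r Ap) /l mulrAC divfK ?gt_eqF // mulrC in lR.
have -> : Num.sqrt p * A = \sum_(i < n | P i) a i * (l * a i).
  under eq_bigr do rewrite mulrCA -expr2.
  rewrite -mulr_sumr -/A2 /l -[A2](sqr_sqrtr A20) -/A.
  by rewrite expr2 mulrA divfK ?gt_eqF.
move: loss; rewrite big_split /= -mulr_sumr sum_la2 mulrAC; lra.
Qed.

Lemma le_SA4_head : R * \sum_(i < n | (i.+1)%:R <= p / R `^ r) a i <= SA4 r R p a.
Proof.
set x := p / R `^ r; have Rr0 : 0 < R `^ r by exact: powR_gt0.
pose t (i : 'I_n) := if (i.+1)%:R <= x then R else 0.
apply: le_trans _ (le_SA4 (t := t) R_gt1 a _).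
  rewrite mulr_sumr big_mkcond; apply: ler_sum => i _.
  by rewrite /t; case: ifP => _; rewrite ?mulr0 // mulrC.
split=> [i|]; first by rewrite /t; case: ifP => _; rewrite ?normr0 ?gtr0_norm.
have fR : fA4_fin r R = R `^ r by rewrite /fA4_fin gtr0_norm ?(lt_geF R_gt1).
apply: (@le_trans _ _ (R `^ r * \sum_(i < n | (i.+1)%:R <= x) 1)).
  rewrite mulr_sumr [X in _ <= X]big_mkcond; apply: ler_sum => i _.
  by rewrite /t; case: ifP => _; rewrite ?fA4_fin0 // fR mulr1.
apply: le_trans (ler_wpM2l (ltW Rr0) (head_count_le _ _)) _.
  by rewrite divr_ge0 // ltW.
by rewrite /x mulrC divfK ?gt_eqF.
Qed.

End LowerBounds.

Lemma le_SA4_first (K : realType) (r R p : K) n (a : 'I_n -> K) :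
  0 < r -> 1 < R -> 1 <= p -> p <= R `^ r ->
  p `^ r^-1 * \sum_(i < n | val i == 0%N) a i <= SA4 r R p a.
Proof.
move=> r0 R1 p1 pR; set x := p `^ r^-1; have R0 : 0 <= R by lra.
have x0 : 0 <= x := powR_ge0 _ _.
have xR : x <= R.
  have : x <= (R `^ r) `^ r^-1 by apply: ge0_ler_powR; rewrite ?nnegrE ?powR_ge0 ?invr_ge0 //; lra.
  by rewrite -powRrM mulfV ?gt_eqF // powRr1.
have fx : fA4_fin r x <= p.
  rewrite /fA4_fin ger0_norm //; case: ifP => x1.
    by apply: le_trans p1; rewrite expr_le1.
  by rewrite /x -powRrM mulVf ?gt_eqF // powRr1 //; lra.
pose t (i : 'I_n) := if val i == 0%N then x else 0.
apply: le_trans _ (le_SA4 (t := t) R1 a _).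
  rewrite mulr_sumr big_mkcond; apply: ler_sum => i _.
  by rewrite /t; case: ifP => _; rewrite ?mulr0 // mulrC.
split=> [i|]; first by rewrite /t; case: ifP => _; rewrite ?normr0 ?ger0_norm.
apply: (@le_trans _ _ (fA4_fin r x * \sum_(i < n | (i.+1)%:R <= 1) 1)).
  rewrite mulr_sumr [X in _ <= X]big_mkcond; apply: ler_sum => i _; rewrite /t lern1 ltnS leqn0.
  by case: ifP => _; rewrite ?fA4_fin0 // mulr1.
apply: le_trans (ler_wpM2l (fA4_fin_ge0 _ _) (head_count_le _ ler01)) _.
by rewrite mulr1.
Qed.

Lemma feasibleA4_norm_le (K : realType) n (r R p : K) (t : 'I_n -> K) (i : 'I_n) :
  0 < r -> feasibleA4 r R p t -> 1 < `|t i| -> `|t i| <= p `^ r^-1.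
Proof.
move=> r0 [_ ft] ti1.
have : fA4_fin r (t i) <= p.
  apply: le_trans ft; rewrite (bigD1 i) //= lerDl.
  by apply: sumr_ge0 => j _; exact: fA4_fin_ge0.
rewrite /fA4_fin (lt_geF ti1) => tip.
have p0 : 0 <= p := le_trans (powR_ge0 _ _) tip.
have : (`|t i| `^ r) `^ r^-1 <= p `^ r^-1.
  by apply: ge0_ler_powR; rewrite ?nnegrE ?powR_ge0 ?invr_ge0 // ltW.
by rewrite -powRrM mulfV ?gt_eqF // powRr1.
Qed.

(* b keeps the coordinates with |t_i| <= 1; a larger one satisfies |t_i| <= M^(1-r) s_i
   with s_i := |t_i|^r. *)
Lemma feasibleA4_split (K : realType) n (r R p M : K) (a t : 'I_n -> K) :
  0 <= r -> r <= 1 -> (forall i, 0 <= a i) -> feasibleA4 r R p t ->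
  (forall i, 1 < `|t i| -> `|t i| <= M) ->
  exists b s : 'I_n -> K, [/\ forall i, 0 <= b i <= 1, \sum_(i < n) b i ^+ 2 <= p,
    forall i, 0 <= s i <= R `^ r, \sum_(i < n) s i <= p &
    \sum_(i < n) a i * t i <= \sum_(i < n) a i * b i + M `^ (1 - r) * \sum_(i < n) a i * s i].
Proof.
move=> r0 r1 a0 [tR ft] tM.
exists (fun i => if `|t i| <= 1 then `|t i| else 0).
exists (fun i => if `|t i| <= 1 then 0 else `|t i| `^ r).
split.
- by move=> i; case: ifP => ti1; rewrite ?ti1 ?normr_ge0 ?lexx ?ler01.
- apply: le_trans ft; apply: ler_sum => i _; rewrite /fA4_fin.
  by case: ifP => _; rewrite ?real_normK ?num_real // expr0n powR_ge0.
- move=> i; case: ifP => _; rewrite ?lexx ?powR_ge0 //=.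
  by apply: ge0_ler_powR; rewrite ?nnegrE ?normr_ge0 ?tR //; apply: le_trans (tR i).
- by apply: le_trans ft; apply: ler_sum => i _; rewrite /fA4_fin; case: ifP => _; rewrite ?sqr_ge0.
- rewrite mulr_sumr -big_split /=; apply: ler_sum => i _.
  apply: le_trans (ler_wpM2l (a0 i) (real_ler_norm (num_real (t i)))) _.
  case: ifP => [_|/negbT]; first by rewrite !mulr0 addr0.
  rewrite -ltNge => ti1; rewrite mulr0 add0r mulrCA; apply: ler_wpM2l => //.
  by rewrite mulrC; apply: ler_powR_interpolate => //; exact: tM.
Qed.

Section Regimes.

Variables (K : realType) (r R p : K) (n : nat) (a : 'I_n -> K).
Hypotheses (r_gt0 : 0 < r) (r_le1 : r <= 1) (R_gt1 : 1 < R) (p_ge1 : 1 <= p).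
Hypotheses (a_ge0 : forall i, 0 <= a i) (a_noninc : forall i j : 'I_n, (i <= j)%N -> a j <= a i).

Let p_ge0 : 0 <= p := le_trans ler01 p_ge1.
Let R_gt0 : 0 < R := lt_trans ltr01 R_gt1.
Let Rr_gt0 : 0 < R `^ r := powR_gt0 r R_gt0.
Let Rr_le_R : R `^ r <= R := ler1_powR (ltW R_gt1) r_le1.

Local Notation S := (SA4 r R p a).
Local Notation A := (Num.sqrt (\sum_(i < n) a i ^+ 2)).
Local Notation H := (\sum_(i < n | (i.+1)%:R <= p / R `^ r) a i).

Lemma sum_mul_le_sqrt (b : 'I_n -> K) :
  \sum_(i < n) b i ^+ 2 <= p -> \sum_(i < n) a i * b i <= Num.sqrt p * A.
Proof.
move=> b2; apply: le_trans (cauchy_schwarz xpredT a b) _.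
by rewrite mulrC ler_wpM2r ?sqrtr_ge0 ?ler_wsqrtr.
Qed.

Lemma sqrt_le_SA4 : p <= R ^+ 2 -> Num.sqrt p * A <= S.
Proof.
move=> pR2; have r2 : r <= 2 by apply: le_trans r_le1 _; rewrite ler1n.
have := le_SA4_sqrt R_gt1 p_ge0 a_ge0 (P := xpredT) r2 (lexx 0).
rewrite mul0r mul0r addr0; apply=> i _.
rewrite ltNge => /negP []; apply: ler_pM; rewrite ?sqrtr_ge0 //.
  by rewrite -(ger0_norm (ltW R_gt0)) -sqrtr_sqr ler_wsqrtr.
rewrite -(ger0_norm (a_ge0 i)) -sqrtr_sqr ler_wsqrtr // (bigD1 i) //= lerDl.
by apply: sumr_ge0 => j _; exact: sqr_ge0.
Qed.

Lemma feasibleA4_le_head (t : 'I_n -> K) : feasibleA4 r R p t -> R `^ r <= p ->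
  exists b : 'I_n -> K, [/\ forall i, 0 <= b i <= 1, \sum_(i < n) b i ^+ 2 <= p &
    \sum_(i < n) a i * t i <= \sum_(i < n) a i * b i + 3 * R * H].
Proof.
move=> ft Rrp; have [tR _] := ft.
have [b [s [b01 b2 s0 s1 ts]]] := feasibleA4_split (ltW r_gt0) r_le1 a_ge0 ft (fun i _ => tR i).
exists b; split=> //; apply: le_trans ts _; rewrite lerD2l.
have := sum_mul_le_head a_ge0 a_noninc Rr_gt0 Rrp s0 s1.
move/(ler_wpM2l (powR_ge0 R (1 - r))) /le_trans; apply.
have RE : R `^ (1 - r) * R `^ r = R.
  by rewrite -powRD ?subrK ?powRr1 ?(ltW R_gt0) // (gt_eqF R_gt0) implybT.
have -> : R `^ (1 - r) * (3 * R `^ r * H) = 3 * (R `^ (1 - r) * R `^ r) * H by ring.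
by rewrite RE.
Qed.

Lemma SA4_small_p : p <= R `^ r -> BA4 r R p a <= 4 * S /\ S <= 4 * BA4 r R p a.
Proof.
move=> pRr; rewrite /BA4 pRr.
have lo1 := le_SA4_first a r_gt0 R_gt1 p_ge1 pRr.
set a1 := \sum_(i < n | val i == 0%N) a i in lo1 *.
have a1_0 : 0 <= a1 by exact: sumr_ge0.
have lo2 : Num.sqrt p * A <= S.
  by apply: sqrt_le_SA4; apply: le_trans pRr (le_trans Rr_le_R _); rewrite expr2 ler_peMr ?ltW.
have B0 : 0 <= p `^ r^-1 * a1 by rewrite mulr_ge0 ?powR_ge0.
split; first by have := mulr_ge0 (sqrtr_ge0 p) (sqrtr_ge0 (\sum_(i < n) a i ^+ 2)); lra.
apply: SA4_le => // t ft.
have [b [s [_ b2 s0 s_sum ts]]] :=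
  feasibleA4_split (ltW r_gt0) r_le1 a_ge0 ft (fun i => feasibleA4_norm_le r_gt0 ft).
have as1 : \sum_(i < n) a i * s i <= a1 * p.
  apply: le_trans (_ : _ <= \sum_(i < n) a1 * s i) _; last by rewrite -mulr_sumr ler_wpM2l.
  apply: ler_sum => i _; rewrite ler_wpM2r //; first by case/andP: (s0 i).
  have i0 : (0 < n)%N by apply: leq_ltn_trans (ltn_ord i).
  rewrite /a1 (bigD1 (Ordinal i0)) //=; apply: le_trans (@a_noninc (Ordinal i0) i (leq0n i)) _.
  by rewrite lerDl; apply: sumr_ge0.
have pE : (p `^ r^-1) `^ (1 - r) * p = p `^ r^-1.
  rewrite -powRrM -{2}(powRr1 p_ge0) -powRD; last first.
    by apply/implyP => _; rewrite lt0r_neq0 // (lt_le_trans ltr01 p_ge1).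
  by congr (_ `^ _); field; rewrite gt_eqF.
have := ler_wpM2l (powR_ge0 (p `^ r^-1) (1 - r)) as1.
rewrite mulrCA pE mulrC => big_part.
have := sum_mul_le_sqrt b2.
have := mulr_ge0 (sqrtr_ge0 p) (sqrtr_ge0 (\sum_(i < n) a i ^+ 2)).
lra.
Qed.

Lemma SA4_mid_p : R `^ r < p -> p <= R ^+ 2 ->
  BA4 r R p a <= 4 * S /\ S <= 4 * BA4 r R p a.
Proof.
move=> Rrp pR2; rewrite /BA4 (lt_geF Rrp) pR2.
have lo1 := le_SA4_head r a R_gt1 p_ge0.
have lo2 := sqrt_le_SA4 pR2.
have RH0 : 0 <= R * H by rewrite mulr_ge0 ?sumr_ge0 ?ltW.
have := mulr_ge0 (sqrtr_ge0 p) (sqrtr_ge0 (\sum_(i < n) a i ^+ 2)).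
split; first lra.
apply: SA4_le => // t ft.
have [b [_ b2 tb]] := feasibleA4_le_head ft (ltW Rrp).
have := sum_mul_le_sqrt b2; lra.
Qed.

Let R2_gt0 : 0 < R ^+ 2 := exprn_gt0 2 R_gt0.

Let tail_le_head_threshold : p / R ^+ 2 <= p / R `^ r.
Proof.
rewrite ler_wpM2l // lef_pV2 ?posrE //; apply: le_trans Rr_le_R _.
by rewrite expr2 ler_peMr ?ltW.
Qed.

(* Beyond index p/R^2, a_i <= 2 R^2 H / p, so truncating the test vector costs at most 2 R H. *)
Lemma tail_sqrt_le_SA4 : R ^+ 2 < p ->
  Num.sqrt p * Num.sqrt (\sum_(i < n | p / R ^+ 2 <= (i.+1)%:R) a i ^+ 2) <= S + 2 * R * H.
Proof.
move=> R2p; have x2_le := tail_le_head_threshold.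
set x2 := p / R ^+ 2 in x2_le *.
have p_gt0 : 0 < p := lt_le_trans ltr01 p_ge1.
have x2_ge1 : 1 <= x2 by rewrite /x2 ler_pdivlMr // mul1r ltW.
have H0 : 0 <= H by exact: sumr_ge0.
have r2 : r <= 2 by apply: le_trans r_le1 _; rewrite ler1n.
have M0 : 0 <= 2 * R ^+ 2 * H / p.
  by rewrite divr_ge0 ?(ltW p_gt0) // !mulr_ge0 // ltW.
have := le_SA4_sqrt R_gt1 p_ge0 a_ge0 (P := fun i => x2 <= (i.+1)%:R) r2 M0.
have -> : 2 * R ^+ 2 * H / p * p / R = 2 * R * H.
  by field; rewrite !gt_eqF.
apply=> i tail_i _; rewrite ler_pdivlMr // -[p in _ * p](divfK (lt0r_neq0 R2_gt0)) -/x2.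
have := head_sum_ge a_ge0 a_noninc x2_ge1 tail_i.
have : \sum_(j < n | (j.+1)%:R <= x2) a j <= H.
  apply: ler_sum_subset => [j|j _]; last exact: a_ge0.
  by move/le_trans; apply.
move=> headH aiH; rewrite mulrA (mulrAC 2); apply: ler_wpM2r; [exact: ltW | lra].
Qed.

Lemma SA4_large_p : R ^+ 2 < p -> BA4 r R p a <= 4 * S /\ S <= 4 * BA4 r R p a.
Proof.
move=> R2p; have Rrp : R `^ r < p.
  by apply: le_lt_trans R2p; apply: le_trans Rr_le_R _; rewrite expr2 ler_peMr ?ltW.
rewrite /BA4 (lt_geF Rrp) (lt_geF R2p).
have lo1 := le_SA4_head r a R_gt1 p_ge0.
have lo2 := tail_sqrt_le_SA4 R2p; have x2_le := tail_le_head_threshold.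
set x2 := p / R ^+ 2 in lo2 x2_le *.
set AT := Num.sqrt (\sum_(i < n | x2 <= (i.+1)%:R) a i ^+ 2) in lo2 *.
have RH0 : 0 <= R * H by rewrite mulr_ge0 ?sumr_ge0 ?ltW.
have HRH : H <= R * H by rewrite ler_peMl ?sumr_ge0 ?ltW.
have := mulr_ge0 (sqrtr_ge0 p) (sqrtr_ge0 (\sum_(i < n | x2 <= (i.+1)%:R) a i ^+ 2)).
rewrite -/AT => sAT0.
split; first lra.
apply: SA4_le => // t ft.
have [b [b01 b2 tb]] := feasibleA4_le_head ft (ltW Rrp).
have tail_part : \sum_(i < n | x2 <= (i.+1)%:R) a i * b i <= Num.sqrt p * AT.
  apply: le_trans (cauchy_schwarz _ a b) _; rewrite mulrC ler_wpM2r ?sqrtr_ge0 //.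
  apply: ler_wsqrtr; apply: le_trans b2.
  by apply: ler_sum_subset => // i _; exact: sqr_ge0.
have head_part : \sum_(i < n | ~~ (x2 <= (i.+1)%:R)) a i * b i <= H.
  apply: le_trans (_ : _ <= \sum_(i < n | ~~ (x2 <= (i.+1)%:R)) a i) _.
    by apply: ler_sum => i _; rewrite ler_piMr //; case/andP: (b01 i).
  apply: ler_sum_subset => [i|i _]; last exact: a_ge0.
  by rewrite -ltNge => /ltW /le_trans; apply.
move: tb; rewrite [\sum_(i < n) a i * b i](bigID (fun i : 'I_n => x2 <= (i.+1)%:R)) /=; lra.
Qed.

End Regimes.

Theorem lemmaA4 (K : realType) :
  exists C : K, 0 < C /\
  forall (r R p : K) (n : nat) (a : 'I_n -> K),
    0 < r -> r <= 1 -> 1 < R -> 1 <= p ->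
    (forall i : 'I_n, 0 <= a i) ->
    (forall i j : 'I_n, (i <= j)%N -> a j <= a i) ->
    BA4 r R p a / C <= SA4 r R p a /\ SA4 r R p a <= C * BA4 r R p a.
Proof.
exists 4; split=> [|r R p n a r0 r1 R1 p1 a0 a_noninc]; first lra.
suff [lo up] : BA4 r R p a <= 4 * SA4 r R p a /\ SA4 r R p a <= 4 * BA4 r R p a.
  by split=> //; rewrite ler_pdivrMr // mulrC.
have [pRr|Rrp] := leP p (R `^ r); first exact: SA4_small_p.
have [pR2|R2p] := leP p (R ^+ 2); first exact: SA4_mid_p.
exact: SA4_large_p.
Qed.
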